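(* Let $\alpha$ be a regular cardinal, let $\mathcal{C}$ be a category and let $M\colon \mathcal{C}^{op}\to \mathbf{Set}$ be a functor which is $\alpha$-small and $\alpha$-flat. Then $M$ is Cauchy.
   Context: A functor $M\colon \mathcal{C}^{op}\to\mathbf{Set}$ is $\alpha$-flat if its left Kan extension $\mathrm{Lan}_Y M\colon[\mathcal{C},\mathbf{Set}]\to\mathbf{Set}$ along the Yoneda embedding $Y\colon \mathcal{C}^{op}\to[\mathcal{C},\mathbf{Set}]$ preserves all $\alpha$-small limits (limits of diagrams indexed by categories with fewer than $\alpha$ morphisms); it is Cauchy if $\mathrm{Lan}_Y M$ preserves all small limits. $M$ is $\alpha$-small if $\mathcal{C}$ is essentially $\alpha$-small (equivalent to a category with fewer than $\alpha$ morphisms) and $M$ takes values in $\mathbf{Set}_\alpha$, the sets of cardinality less than $\alpha$. *)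

From Stdlib Require Import Relations.




Definition card_le (X Y : Type) : Prop :=
  exists f : X -> Y, forall x y, f x = f y -> x = y.
Definition card_lt (X Y : Type) : Prop := card_le X Y /\ ~ card_le Y X.

Definition regular_card (A : Type) : Prop :=
  card_le nat A /\
  forall (I : Type) (X : I -> Type),
    card_lt I A -> (forall i, card_lt (X i) A) -> card_lt {i : I & X i} A.

Record Cat : Type := {
  ob : Type;
  hom : ob -> ob -> Type;
  idm : forall a, hom a a;
  comp : forall {a b c}, hom b c -> hom a b -> hom a c;
  comp_id_l : forall a b (f : hom a b), comp (idm b) f = f;
  comp_id_r : forall a b (f : hom a b), comp f (idm a) = f;
  comp_assoc : forall a b c d (f : hom a b) (g : hom b c) (h : hom c d),
      comp h (comp g f) = comp (comp h g) f }.
Arguments hom : clear implicits.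
Arguments idm {_} _.
Arguments comp {_ _ _ _} _ _.

Definition Mor (C : Cat) : Type := {a : ob C & {b : ob C & hom C a b}}.

Record Functor (D C : Cat) : Type := {
  fo : ob D -> ob C;
  fm : forall {a b}, hom D a b -> hom C (fo a) (fo b);
  fm_id : forall a, fm (idm a) = idm (fo a);
  fm_comp : forall a b c (f : hom D a b) (g : hom D b c),
      fm (comp g f) = comp (fm g) (fm f) }.
Arguments fo {_ _} _ _.
Arguments fm {_ _} _ {_ _} _.

Definition bijective {X Y : Type} (f : X -> Y) : Prop :=
  (forall x y, f x = f y -> x = y) /\ (forall y, exists x, f x = y).

Definition is_iso (C : Cat) (a b : ob C) : Prop :=
  exists (f : hom C a b) (g : hom C b a), comp g f = idm a /\ comp f g = idm b.

(* C is equivalent to a category with fewer than |A| morphisms: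
   there is a fully faithful, essentially surjective functor D -> C from
   a category D with fewer than |A| morphisms. *)
Definition ess_small (A : Type) (C : Cat) : Prop :=
  exists (D : Cat) (G : Functor D C),
    card_lt (Mor D) A /\
    (forall a b, bijective (fun f : hom D a b => fm G f)) /\
    (forall c, exists d, is_iso C (fo G d) c).

Record Psh (C : Cat) : Type := {
  psh_ob : ob C -> Type;
  psh_act : forall {c d}, hom C c d -> psh_ob d -> psh_ob c;
  psh_id : forall c x, psh_act (idm c) x = x;
  psh_comp : forall a b c (f : hom C a b) (g : hom C b c) x,
      psh_act (comp g f) x = psh_act f (psh_act g x) }.
Arguments psh_ob {_} _ _.
Arguments psh_act {_} _ {_ _} _ _.

Record Copsh (C : Cat) : Type := {
  cop_ob : ob C -> Type;
  cop_act : forall {c d}, hom C c d -> cop_ob c -> cop_ob d;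
  cop_id : forall c x, cop_act (idm c) x = x;
  cop_comp : forall a b c (f : hom C a b) (g : hom C b c) x,
      cop_act (comp g f) x = cop_act g (cop_act f x) }.
Arguments cop_ob {_} _ _.
Arguments cop_act {_} _ {_ _} _ _.

Record NatTrans {C : Cat} (F G : Copsh C) : Type := {
  nt : forall c, cop_ob F c -> cop_ob G c;
  nt_nat : forall c d (f : hom C c d) x,
      nt d (cop_act F f x) = cop_act G f (nt c x) }.
Arguments nt {_ _ _} _ _ _.

Record Diagram (J C : Cat) : Type := {
  dg_ob : ob J -> Copsh C;
  dg_map : forall {j k}, hom J j k -> NatTrans (dg_ob j) (dg_ob k);
  dg_id : forall j c x, nt (dg_map (idm j)) c x = x;
  dg_comp : forall i j k (u : hom J i j) (v : hom J j k) c x,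
      nt (dg_map (comp v u)) c x = nt (dg_map v) c (nt (dg_map u) c x) }.
Arguments dg_ob {_ _} _ _.
Arguments dg_map {_ _} _ {_ _} _.

(* ---------- the tensor product  M (x)_C F  (= Lan_Y M evaluated at F) ----
   Elements are triples (c, m, x) with m : M c, x : F c, modulo the
   equivalence relation generated by (d, m, F f x) ~ (c, M f m, x)
   for f : c -> d. *)
Section Tensor.
Variables (C : Cat) (M : Psh C) (F : ob C -> Type)
          (act : forall {c d}, hom C c d -> F c -> F d).

Definition tens_elt : Type := {c : ob C & (psh_ob M c * F c)%type}.

Inductive tens_step : tens_elt -> tens_elt -> Prop :=
| tens_step_intro : forall c d (f : hom C c d) (m : psh_ob M d) (x : F c),
    tens_step (existT _ d (m, act f x)) (existT _ c (psh_act M f m, x)).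

Definition tens_eq : tens_elt -> tens_elt -> Prop :=
  clos_refl_sym_trans tens_elt tens_step.
End Tensor.
Arguments tens_elt {C} M F.
Arguments tens_step {C} M F act _ _.
Arguments tens_eq {C} M F act _ _.

Definition tens_eqc {C : Cat} (M : Psh C) (F : Copsh C) :=
  tens_eq M (cop_ob F) (@cop_act C F).

Definition tens_map {C : Cat} (M : Psh C) {F G : Copsh C} (t : NatTrans F G)
  (e : tens_elt M (cop_ob F)) : tens_elt M (cop_ob G) :=
  match e with existT _ c (m, x) => existT _ c (m, nt t c x) end.

Section Limit.
Variables (J C : Cat) (D : Diagram J C).

Definition lim_ob (c : ob C) : Type :=
  { x : forall j, cop_ob (dg_ob D j) c |
    forall j k (u : hom J j k), nt (dg_map D u) c (x j) = x k }.

Lemma lim_act_compat (c d : ob C) (f : hom C c d) (x : lim_ob c) :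
  forall j k (u : hom J j k),
    nt (dg_map D u) d (cop_act (dg_ob D j) f (proj1_sig x j))
    = cop_act (dg_ob D k) f (proj1_sig x k).
Proof.
  intros j k u. rewrite nt_nat. now rewrite (proj2_sig x j k u).
Qed.

Definition lim_act {c d : ob C} (f : hom C c d) (x : lim_ob c) : lim_ob d :=
  exist _ (fun j => cop_act (dg_ob D j) f (proj1_sig x j))
          (lim_act_compat c d f x).

Definition comparison (M : Psh C) (e : tens_elt M lim_ob) (j : ob J)
  : tens_elt M (cop_ob (dg_ob D j)) :=
  match e with existT _ c (m, x) => existT _ c (m, proj1_sig x j) end.

(* Lan_Y M = M (x)_C - preserves the limit of D: the comparison map from
   M (x) (lim D) to the limit (in Set) of the diagram j |-> M (x) D j is a
   bijection (surjective onto compatible families, and injective), all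
   modulo the defining equivalence relations. *)
Definition preserves_limit (M : Psh C) : Prop :=
  (forall r : forall j, tens_elt M (cop_ob (dg_ob D j)),
     (forall j k (u : hom J j k),
        tens_eqc M (dg_ob D k) (tens_map M (dg_map D u) (r j)) (r k)) ->
     exists e : tens_elt M lim_ob,
       forall j, tens_eqc M (dg_ob D j) (comparison M e j) (r j)) /\
  (forall e e' : tens_elt M lim_ob,
     (forall j, tens_eqc M (dg_ob D j) (comparison M e j) (comparison M e' j)) ->
     tens_eq M lim_ob (@lim_act) e e').
End Limit.
Arguments preserves_limit {J C} D M.

Definition alpha_flat (A : Type) {C : Cat} (M : Psh C) : Prop :=
  forall (J : Cat), card_lt (Mor J) A ->
  forall D : Diagram J C, preserves_limit D M.

Definition cauchy {C : Cat} (M : Psh C) : Prop :=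
  forall (J : Cat) (D : Diagram J C), preserves_limit D M.

Definition alpha_small (A : Type) {C : Cat} (M : Psh C) : Prop :=
  ess_small A C /\ forall c : ob C, card_lt (psh_ob M c) A.

From Stdlib Require Import Relations ProofIrrelevance FunctionalExtensionality IndefiniteDescription.

(* Let G : D -> C exhibit C as essentially α-small. The pairs (d, m) with
   m ∈ M(G d) index a diagram d |-> C(G d, -) in [C, Set] with fewer than α
   arrows. Since M ⊗ C(a, -) ≅ M a, the family (m)_(d, m) is a compatible
   family in the limit of the M ⊗ C(G d, -), so flatness lifts it to an
   element (c0, m0, x) of M ⊗ lim: a cone x_(d, m) : G d -> c0 with
   M(x_(d, m)) m0 = m. Transported along the essential surjectivity and
   fullness of G, this cone splits the map C(-, c0) -> M, f |-> M f m0,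
   so M is a retract of a representable. Then M ⊗ F is a retract of F c0,
   naturally in F, and evaluation at c0 preserves all limits. *)

Lemma sig_eq {X : Type} {P : X -> Prop} (a b : sig P) :
  proj1_sig a = proj1_sig b -> a = b.
Proof. apply eq_sig_hprop; intros; apply proof_irrelevance. Qed.

Lemma card_lt_of_injective (X Y A : Type) (f : X -> Y) :
  (forall x y, f x = f y -> x = y) -> card_lt Y A -> card_lt X A.
Proof.
  intros Hf [[g Hg] HnA]. split.
  - exists (fun x => g (f x)). intros x y H. apply Hf, Hg, H.
  - intros [h Hh]. apply HnA. exists (fun a => f (h a)). intros a b H. apply Hh, Hf, H.
Qed.

Lemma tens_eq_invariant {C : Cat} (M : Psh C) (F : ob C -> Type)
  (act : forall c d, hom C c d -> F c -> F d) {B : Type} (g : tens_elt M F -> B) :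
  (forall e e', tens_step M F act e e' -> g e = g e') ->
  forall e e', tens_eq M F act e e' -> g e = g e'.
Proof.
  intros Hstep e e' H. induction H.
  - auto.
  - reflexivity.
  - symmetry; assumption.
  - etransitivity; eassumption.
Qed.

Section Representable.
Variable C : Cat.

Definition hom_copsh (a : ob C) : Copsh C.
Proof.
  refine (Build_Copsh C (fun c => hom C a c) (fun c d f x => comp f x) _ _).
  - intros; apply comp_id_l.
  - intros; symmetry; apply comp_assoc.
Defined.

Definition hom_copsh_map (a b : ob C) (h : hom C b a) :
  NatTrans (hom_copsh a) (hom_copsh b).
Proof.
  refine (Build_NatTrans C (hom_copsh a) (hom_copsh b) (fun c x => comp x h) _).
  intros; simpl; symmetry; apply comp_assoc.
Defined.

Definition tens_hom_eval (M : Psh C) (a : ob C)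
  (e : tens_elt M (cop_ob (hom_copsh a))) : psh_ob M a :=
  psh_act M (snd (projT2 e)) (fst (projT2 e)).

Lemma tens_hom_eval_resp (M : Psh C) (a : ob C) e e' :
  tens_eqc M (hom_copsh a) e e' -> tens_hom_eval M a e = tens_hom_eval M a e'.
Proof.
  apply tens_eq_invariant. intros ? ? []. apply psh_comp.
Qed.
End Representable.

Section YonedaRetract.
Variables (C : Cat) (M : Psh C) (c0 : ob C) (m0 : psh_ob M c0)
  (s : forall c, psh_ob M c -> hom C c c0).
Hypothesis s_natural :
  forall c c' (f : hom C c c') m, s c (psh_act M f m) = comp (s c' m) f.
Hypothesis s_section : forall c m, psh_act M (s c m) m0 = m.

Definition retract_eval (F : ob C -> Type)
  (act : forall c d, hom C c d -> F c -> F d) (e : tens_elt M F) : F c0 :=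
  act _ _ (s (projT1 e) (fst (projT2 e))) (snd (projT2 e)).

Lemma tens_eq_retract_eval F act e :
  tens_eq M F act e (existT _ c0 (m0, retract_eval F act e)).
Proof.
  destruct e as [c [m x]]. apply rst_sym, rst_step.
  pattern m at 2. rewrite <- (s_section c m).
  apply tens_step_intro.
Qed.

Lemma tens_eq_of_retract_eval F act e e' :
  retract_eval F act e = retract_eval F act e' -> tens_eq M F act e e'.
Proof.
  intro H. eapply rst_trans; [apply tens_eq_retract_eval |].
  rewrite H. apply rst_sym, tens_eq_retract_eval.
Qed.

Lemma retract_eval_resp (F : Copsh C) e e' :
  tens_eqc M F e e' ->
  retract_eval _ (@cop_act C F) e = retract_eval _ (@cop_act C F) e'.
Proof.
  apply tens_eq_invariant. intros ? ? []; unfold retract_eval; simpl.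
  rewrite <- cop_comp, s_natural. reflexivity.
Qed.

Lemma retract_eval_tens_map (F G : Copsh C) (t : NatTrans F G) e :
  retract_eval _ (@cop_act C G) (tens_map M t e)
  = nt t c0 (retract_eval _ (@cop_act C F) e).
Proof. destruct e as [c [m x]]. symmetry; apply nt_nat. Qed.

Lemma retract_eval_fixed (F : Copsh C) e :
  cop_act F (s c0 m0) (retract_eval _ (@cop_act C F) e)
  = retract_eval _ (@cop_act C F) e.
Proof.
  unfold retract_eval. rewrite <- cop_comp, <- s_natural, s_section. reflexivity.
Qed.

Lemma retract_preserves_limit (J : Cat) (D : Diagram J C) : preserves_limit D M.
Proof.
  split.
  - intros r Hr.
    set (y := fun j => retract_eval _ (@cop_act C (dg_ob D j)) (r j)).
    assert (Hy : forall j k (u : hom J j k), nt (dg_map D u) c0 (y j) = y k).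
    { intros j k u. unfold y.
      rewrite <- retract_eval_tens_map. apply retract_eval_resp, Hr. }
    exists (existT _ c0 (m0, exist _ y Hy)). intro j.
    apply tens_eq_of_retract_eval, retract_eval_fixed.
  - intros e e' H. apply tens_eq_of_retract_eval, sig_eq.
    apply functional_extensionality_dep. intro j.
    specialize (retract_eval_resp _ _ _ (H j)).
    destruct e as [c [m x]], e' as [c' [m' x']]. tauto.
Qed.
End YonedaRetract.

Definition yoneda_split_epi {C : Cat} (M : Psh C) (c0 : ob C) (m0 : psh_ob M c0) : Prop :=
  exists s : forall c, psh_ob M c -> hom C c c0,
    (forall c c' (f : hom C c c') m, s c (psh_act M f m) = comp (s c' m) f) /\
    (forall c m, psh_act M (s c m) m0 = m).

Lemma yoneda_split_epi_cauchy {C : Cat} (M : Psh C) (c0 : ob C) (m0 : psh_ob M c0) :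
  yoneda_split_epi M c0 m0 -> cauchy M.
Proof.
  intros (s & Hnat & Hsec) J D.
  exact (retract_preserves_limit C M c0 m0 s Hnat Hsec J D).
Qed.

Lemma ess_surj_split_choice {D C : Cat} (G : Functor D C) :
  (forall c, exists d, is_iso C (fo G d) c) ->
  exists (dc : ob C -> ob D) (i : forall c, hom C (fo G (dc c)) c)
         (j : forall c, hom C c (fo G (dc c))),
    forall c, comp (i c) (j c) = idm c.
Proof.
  intro Hess.
  assert (H : forall c, {d : ob D & {i : hom C (fo G d) c &
                 {j : hom C c (fo G d) | comp i j = idm c}}}).
  { intro c.
    destruct (constructive_indefinite_description _ (Hess c)) as [d Hd].
    destruct (constructive_indefinite_description _ Hd) as [i Hi].
    destruct (constructive_indefinite_description _ Hi) as [j Hj].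
    exists d, i, j. apply Hj. }
  exists (fun c => projT1 (H c)), (fun c => projT1 (projT2 (H c))),
         (fun c => proj1_sig (projT2 (projT2 (H c)))).
  intro c. apply (proj2_sig (projT2 (projT2 (H c)))).
Qed.

Section ElementsOp.
Variables (C : Cat) (M : Psh C) (D : Cat) (G : Functor D C).

(* An arrow (d, m) -> (d', m') is an f : d' -> d with M (G f) m = m': this is
   the opposite of the category of elements of M ∘ G^op. *)
Definition el_ob : Type := {d : ob D & psh_ob M (fo G d)}.

Definition el_hom (a b : el_ob) : Type :=
  {f : hom D (projT1 b) (projT1 a) | psh_act M (fm G f) (projT2 a) = projT2 b}.

Lemma el_id_proof (a : el_ob) :
  psh_act M (fm G (idm (projT1 a))) (projT2 a) = projT2 a.
Proof. rewrite fm_id, psh_id. reflexivity. Qed.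

Definition el_id (a : el_ob) : el_hom a a := exist _ (idm _) (el_id_proof a).

Lemma el_comp_proof (a b c : el_ob) (v : el_hom b c) (u : el_hom a b) :
  psh_act M (fm G (comp (proj1_sig u) (proj1_sig v))) (projT2 a) = projT2 c.
Proof.
  destruct u as [fu Hu], v as [fv Hv]; simpl.
  rewrite fm_comp, psh_comp, Hu, Hv. reflexivity.
Qed.

Definition el_comp (a b c : el_ob) (v : el_hom b c) (u : el_hom a b) : el_hom a c :=
  exist _ _ (el_comp_proof a b c v u).

Lemma el_comp_id_l (a b : el_ob) (f : el_hom a b) : el_comp a b b (el_id b) f = f.
Proof. apply sig_eq, comp_id_r. Qed.

Lemma el_comp_id_r (a b : el_ob) (f : el_hom a b) : el_comp a a b f (el_id a) = f.
Proof. apply sig_eq, comp_id_l. Qed.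

Lemma el_comp_assoc (a b c d : el_ob) (f : el_hom a b) (g : el_hom b c) (h : el_hom c d) :
  el_comp a c d h (el_comp a b c g f) = el_comp a b d (el_comp b c d h g) f.
Proof. apply sig_eq; simpl. symmetry; apply comp_assoc. Qed.

Definition elements_op : Cat :=
  Build_Cat el_ob el_hom el_id el_comp el_comp_id_l el_comp_id_r el_comp_assoc.

Definition elements_diagram : Diagram elements_op C.
Proof.
  refine (Build_Diagram elements_op C (fun j => hom_copsh C (fo G (projT1 j)))
            (fun j k u => hom_copsh_map C _ _ (fm G (proj1_sig u))) _ _).
  - intros; simpl. rewrite fm_id. apply comp_id_r.
  - intros; simpl. rewrite fm_comp. apply comp_assoc.
Defined.

Definition el_mor_code (u : Mor elements_op) :
  {f : Mor D & psh_ob M (fo G (projT1 (projT2 f)))} :=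
  match u with existT _ a (existT _ b f) =>
    existT _ (existT _ (projT1 b) (existT _ (projT1 a) (proj1_sig f))) (projT2 a) end.

Definition el_mor_decode (t : {f : Mor D & psh_ob M (fo G (projT1 (projT2 f)))}) :
  Mor elements_op :=
  match t with existT _ (existT _ db (existT _ da f)) ma =>
    existT _ (existT _ da ma : el_ob)
      (existT _ (existT _ db (psh_act M (fm G f) ma) : el_ob)
         (exist _ f eq_refl : el_hom (existT _ da ma) (existT _ db _))) end.

Lemma el_mor_codeK (u : Mor elements_op) : el_mor_decode (el_mor_code u) = u.
Proof. destruct u as [[da ma] [[db mb] [f Hf]]]. simpl in *. destruct Hf. reflexivity. Qed.

Lemma card_lt_elements_op (A : Type) :
  regular_card A -> card_lt (Mor D) A -> (forall c, card_lt (psh_ob M c) A) ->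
  card_lt (Mor elements_op) A.
Proof.
  intros [_ Hreg] HD HM. apply (card_lt_of_injective _ _ _ el_mor_code).
  - intros u v H. rewrite <- (el_mor_codeK u), <- (el_mor_codeK v), H. reflexivity.
  - apply Hreg; [exact HD | intro; apply HM].
Qed.

Definition universal_cone (c0 : ob C) (m0 : psh_ob M c0)
  (x : forall j : el_ob, hom C (fo G (projT1 j)) c0) : Prop :=
  (forall j, psh_act M (x j) m0 = projT2 j) /\
  (forall j k (u : el_hom j k), comp (x j) (fm G (proj1_sig u)) = x k).

Lemma flat_universal_cone :
  preserves_limit elements_diagram M ->
  exists c0 (m0 : psh_ob M c0) (x : forall j : el_ob, hom C (fo G (projT1 j)) c0),
    universal_cone c0 m0 x.
Proof.
  intros [Hlift _].
  set (r := fun j : el_ob =>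
    existT _ (fo G (projT1 j)) (projT2 j, idm (fo G (projT1 j)))
      : tens_elt M (cop_ob (dg_ob elements_diagram j))).
  destruct (Hlift r) as [[c0 [m0 x]] Hx].
  - intros j k [f Hf]. apply rst_step. unfold r; simpl.
    rewrite comp_id_l, <- Hf, <- (comp_id_r _ _ _ (fm G f)) at 1.
    apply tens_step_intro.
  - exists c0, m0, (proj1_sig x). split.
    + intro j. specialize (tens_hom_eval_resp C M _ _ _ (Hx j)).
      unfold tens_hom_eval; simpl. rewrite psh_id. tauto.
    + intros j k u. exact (proj2_sig x j k u).
Qed.

Lemma cone_yoneda_split_epi (c0 : ob C) (m0 : psh_ob M c0)
  (x : forall j : el_ob, hom C (fo G (projT1 j)) c0) :
  (forall a b (h : hom C (fo G a) (fo G b)), exists f, fm G f = h) ->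
  (forall c, exists d, is_iso C (fo G d) c) ->
  universal_cone c0 m0 x -> yoneda_split_epi M c0 m0.
Proof.
  intros Gfull Hess [Hx Hcone].
  destruct (ess_surj_split_choice G Hess) as (dc & i & j & Hij).
  set (el := fun c (m : psh_ob M c) => existT _ (dc c) (psh_act M (i c) m) : el_ob).
  exists (fun c m => comp (x (el c m)) (j c)). split.
  - intros c c' f m.
    destruct (Gfull _ _ (comp (j c') (comp f (i c)))) as [h Hh].
    assert (Hu : psh_act M (fm G h) (projT2 (el c' m)) = projT2 (el c (psh_act M f m))).
    { simpl. rewrite Hh, <- psh_comp, comp_assoc, Hij, comp_id_l, psh_comp.
      reflexivity. }
    pose (u := exist _ h Hu : el_hom (el c' m) (el c (psh_act M f m))).
    rewrite <- (Hcone _ _ u); simpl. rewrite Hh.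
    rewrite <- !comp_assoc, Hij, comp_id_r. reflexivity.
  - intros c m. rewrite psh_comp, Hx; simpl.
    rewrite <- psh_comp, Hij, psh_id. reflexivity.
Qed.
End ElementsOp.

Theorem lemma2p6 (A : Type) (HA : regular_card A) (C : Cat) (M : Psh C)
  (Hsmall : alpha_small A M) (Hflat : alpha_flat A M) : cauchy M.
Proof.
  destruct Hsmall as [[D [G [HD [Hff Hess]]]] HM].
  pose proof (card_lt_elements_op C M D G A HA HD HM) as Hcard.
  destruct (flat_universal_cone C M D G (Hflat _ Hcard (elements_diagram C M D G)))
    as (c0 & m0 & x & Hcone).
  apply (yoneda_split_epi_cauchy M c0 m0).
  exact (cone_yoneda_split_epi C M D G c0 m0 x (fun a b => proj2 (Hff a b)) Hess Hcone).
Qed.
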